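(* There exists a one-pass streaming $2$-approximation algorithm for the unweighted cycle augmentation problem whose total memory is $O(n)$ edges.
   Context: Cycle augmentation problem: given a cycle $C$ on vertex set $V=\{0,1,\dots,n-1\}$ (edges $(i-1,i)$, indices mod $n$), which is known in advance, and a set of links $L\subseteq\binom{V}{2}$ that arrive one by one in an arbitrary order in a stream, find a minimum-cardinality (in the unweighted case) subset $S\subseteq L$ such that $(V,C\cup S)$ is $3$-edge-connected. A $2$-approximation outputs a feasible $S$ of size at most twice the optimum. *)

From mathcomp Require Import all_boot.
Set Implicit Arguments. Unset Strict Implicit. Unset Printing Implicit Defensive.

Definition link (n : nat) := ('I_n * 'I_n)%type.

Definition cycle_edges (n : nat) : seq (link n) :=
  [seq (i, ordS i) | i <- enum 'I_n].

Definition crossing (n : nat) (X : {set 'I_n}) (E : seq (link n)) : nat :=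
  count (fun e : link n => (e.1 \in X) != (e.2 \in X)) E.

Definition three_edge_connected (n : nat) (E : seq (link n)) : Prop :=
  forall X : {set 'I_n}, X != set0 -> X != setT -> 3 <= crossing X E.

Definition feasible (n : nat) (S : seq (link n)) : Prop :=
  three_edge_connected (cycle_edges n ++ S).

(* A set of links L ⊆ binom(V,2), given as a stream in arbitrary order:
   each unordered pair {u,v} is encoded as (u,v) with u < v, no repetitions. *)
Definition valid_links (n : nat) (L : seq (link n)) : bool :=
  uniq L && all (fun e : link n => (e.1 < e.2)%N) L.

(* A one-pass streaming algorithm for instances on n vertices (n and C are
   known in advance).  Its memory state is a list of stored edges (pairs of
   vertices, i.e. words of O(log n) bits); it reads each link of the stream
   once, in order, updating the state, and finally produces its output from
   the state alone. *)
Record stream_alg (n : nat) := StreamAlg {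
  sa_init : seq (link n);
  sa_step : seq (link n) -> link n -> seq (link n);
  sa_output : seq (link n) -> seq (link n)
}.

Definition run (n : nat) (A : stream_alg n) (L : seq (link n)) : seq (link n) :=
  sa_output A (foldl (sa_step A) (sa_init A) L).

From mathcomp Require Import all_boot zify.
Set Implicit Arguments. Unset Strict Implicit. Unset Printing Implicit Defensive.

(* The algorithm stores, for every vertex u, a link (u, w) with w maximal and, for every
   vertex w, a link (u, w) with u minimal: at most 2n links, such that every link
   (u, w) of the stream is dominated by a stored link (u, w') with w <= w' and by a
   stored link (u', w) with u' <= u.  It outputs a smallest feasible set of stored links
   (by exhaustive search: the model charges memory only for the state kept between links).
   The factor 2 comes from replacing each link of an optimal solution by its two
   dominating links, which preserves feasibility.  Indeed, complement a cut X if
   necessary so that 0 is outside X.  The cycle crosses X once per change of membership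
   along 0, 1, ..., n - 1, 0, so at least twice, and at least four times unless X is an
   interval of 0, 1, ..., n - 1.  A link crossing an interval has one endpoint inside
   and one outside, and the dominating link sharing the inner endpoint reaches even
   farther outside, so it crosses X too. *)

Definition changes (f : nat -> bool) (p q : nat) : nat :=
  count (fun i => f i != f i.+1) (index_iota p q).

Lemma changesD f p q r : p <= q <= r ->
  changes f p r = changes f p q + changes f q r.
Proof.
move=> /andP[pq qr]; rewrite /changes /index_iota -count_cat.
have -> : r - p = (q - p) + (r - q) by lia.
by rewrite iotaD subnKC.
Qed.

Lemma changes_gt0 f p q : p <= q -> f p != f q -> 0 < changes f p q.
Proof.
elim: q => [|q IHq]; first by rewrite leqn0 => /eqP->; rewrite eqxx.
rewrite leq_eqVlt ltnS => /orP[/eqP-> | pq]; first by rewrite eqxx.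
rewrite (@changesD _ _ q) ?pq ?leqnSn //.
have -> : changes f q q.+1 = (f q != f q.+1).
  by rewrite /changes /index_iota subSnn /= addn0.
case: (f p =P f q) => [-> -> | /eqP/(IHq pq) pos _]; first by rewrite addn1.
exact: leq_trans pos (leq_addr _ _).
Qed.

Section CycleCuts.
Variables (n : nat) (X : {set 'I_n}).

Definition in_cut (k : nat) : bool := k \in [seq val i | i in X].

Lemma in_cut_ord (i : 'I_n) : in_cut i = (i \in X).
Proof. exact: (mem_image val_inj). Qed.

Lemma in_cut_lt k : in_cut k -> k < n.
Proof. by case/imageP=> i _ ->; apply: ltn_ord. Qed.

Lemma in_cut_n : ~~ in_cut n.
Proof. by apply/negP=> /in_cut_lt; rewrite ltnn. Qed.

Definition crosses (e : link n) : bool := (e.1 \in X) != (e.2 \in X).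

Lemma crossing_gt0 (E : seq (link n)) : (0 < crossing X E) = has crosses E.
Proof. by rewrite has_count. Qed.

Hypothesis out0 : ~~ in_cut 0.

(* As 0 and n both lie outside the cut, the closing edge (n - 1, 0) acts as (n - 1, n). *)
Lemma crossing_cycleE : crossing X (cycle_edges n) = changes in_cut 0 n.
Proof.
rewrite /crossing /cycle_edges count_map /changes /index_iota subn0 -val_enum_ord.
rewrite count_map; apply: eq_count => i /=; rewrite -!in_cut_ord /=.
have [lt_i1n | ge_i1n] := ltnP i.+1 n; first by rewrite modn_small.
have -> : i.+1 = n by apply/eqP; rewrite eqn_leq ge_i1n ltn_ord.
by rewrite modnn (negbTE out0) (negbTE in_cut_n).
Qed.

Lemma cycle_cut_ge2 : X != set0 -> 2 <= crossing X (cycle_edges n).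
Proof.
case/set0Pn=> i iX; have in_i : in_cut i by rewrite in_cut_ord.
have le_in : i <= n := ltnW (ltn_ord i).
have pos_0i : 0 < changes in_cut 0 i.
  by apply: changes_gt0; rewrite // in_i (negbTE out0).
have pos_in : 0 < changes in_cut i n.
  by apply: changes_gt0; rewrite // in_i (negbTE in_cut_n).
by rewrite crossing_cycleE (changesD _ (_ : 0 <= i <= n)) ?le_in //; lia.
Qed.

Lemma cycle_cut_convex a b c : crossing X (cycle_edges n) < 3 ->
  a < b < c -> in_cut a -> in_cut c -> in_cut b.
Proof.
move=> cross_lt3 /andP[lt_ab lt_bc] in_a in_c; apply: contraTT cross_lt3 => out_b.
have le_cn : c <= n := ltnW (in_cut_lt in_c).
have pos_0a : 0 < changes in_cut 0 a.
  by apply: changes_gt0; rewrite // in_a (negbTE out0).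
have pos_ab : 0 < changes in_cut a b.
  by apply: changes_gt0 (ltnW lt_ab) _; rewrite in_a (negbTE out_b).
have pos_bc : 0 < changes in_cut b c.
  by apply: changes_gt0 (ltnW lt_bc) _; rewrite in_c (negbTE out_b).
have pos_cn : 0 < changes in_cut c n.
  by apply: changes_gt0; rewrite // in_c (negbTE in_cut_n).
rewrite -leqNgt crossing_cycleE (changesD _ (_ : 0 <= a <= n)) ?leq0n; last by lia.
rewrite (changesD _ (_ : a <= b <= n)); last by lia.
rewrite (changesD _ (_ : b <= c <= n)); last by lia.
lia.
Qed.

End CycleCuts.

Lemma crossing_cat n (X : {set 'I_n}) (E F : seq (link n)) :
  crossing X (E ++ F) = crossing X E + crossing X F.
Proof. exact: count_cat. Qed.

Lemma crossingC n (X : {set 'I_n}) (E : seq (link n)) : crossing (~: X) E = crossing X E.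
Proof. by apply: eq_count => e; rewrite !inE; case: (e.1 \in X); case: (e.2 \in X). Qed.

Lemma in_cutC0 n (X : {set 'I_n}) : in_cut X 0 -> ~~ in_cut (~: X) 0.
Proof.
case/imageP=> i iX i0; apply/negP => /imageP[j]; rewrite inE => jX j0.
suff ij : i = j by rewrite ij (negbTE jX) in iX.
by apply: val_inj; rewrite -i0 -j0.
Qed.

Section Domination.
Variable n : nat.
Implicit Types (b h l : link n) (H K S T : seq (link n)).

Definition extends_right b l : bool := (b.1 == l.1) && (l.2 <= b.2).
Definition extends_left b l : bool := (b.2 == l.2) && (b.1 <= l.1).

Lemma extends_right_trans h b l :
  extends_right h b -> extends_right b l -> extends_right h l.
Proof.
rewrite /extends_right => /andP[/eqP-> le_bh] /andP[/eqP-> le_lb].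
by rewrite eqxx (leq_trans le_lb).
Qed.

Lemma extends_left_trans h b l :
  extends_left h b -> extends_left b l -> extends_left h l.
Proof.
rewrite /extends_left => /andP[/eqP-> le_hb] /andP[/eqP-> le_bl].
by rewrite eqxx (leq_trans le_hb).
Qed.

Definition dominated H l : bool :=
  has (extends_right^~ l) H && has (extends_left^~ l) H.

Lemma dominated_sub H K l : {subset H <= K} -> dominated H l -> dominated K l.
Proof.
move=> sHK /andP[/hasP[b /sHK bK rbl] /hasP[b' /sHK b'K lb'l]].
by apply/andP; split; apply/hasP; [exists b | exists b'].
Qed.

Lemma dominated_trans H K l :
  {in H, forall b, dominated K b} -> dominated H l -> dominated K l.
Proof.
move=> domH /andP[/hasP[b bH rbl] /hasP[b' b'H lb'l]].
have /andP[/hasP[h hK rhb] _] := domH b bH.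
have /andP[_ /hasP[h' h'K lh'b']] := domH b' b'H.
apply/andP; split; apply/hasP.
  by exists h => //; apply: extends_right_trans rbl.
by exists h' => //; apply: extends_left_trans lb'l.
Qed.

Lemma dominated_crosses (X : {set 'I_n}) H l :
  ~~ in_cut X 0 -> crossing X (cycle_edges n) < 3 -> l.1 < l.2 ->
  crosses X l -> dominated H l -> has (crosses X) H.
Proof.
move=> out0 cross_lt3 lt_l cross_l /andP[/hasP[b bH rbl] /hasP[b' b'H lb'l]].
have convex := cycle_cut_convex out0 cross_lt3.
move: cross_l; rewrite /crosses -!in_cut_ord.
case: (boolP (in_cut X l.1)) => in_l1; case: (boolP (in_cut X l.2)) => in_l2 //= _.
- case/andP: rbl => /eqP b1 le_b2; apply/hasP; exists b => //.
  rewrite /crosses -!in_cut_ord b1.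
  suff -> : in_cut X b.2 = false by rewrite in_l1.
  case: (ltngtP l.2 b.2) le_b2 => [lt_b2 _ | // | <- _]; last exact: negbTE.
  apply/negbTE; apply: contra in_l2 => in_b2.
  by apply: (convex l.1 l.2 b.2); rewrite ?lt_l ?lt_b2.
- case/andP: lb'l => /eqP b'2 le_b'1; apply/hasP; exists b' => //.
  rewrite /crosses -!in_cut_ord b'2.
  suff -> : in_cut X b'.1 = false by rewrite in_l2.
  case: (ltngtP b'.1 l.1) le_b'1 => [lt_b'1 _ | // | -> _]; last exact: negbTE.
  apply/negbTE; apply: contra in_l1 => in_b'1.
  by apply: (convex b'.1 l.1 l.2); rewrite ?lt_l ?lt_b'1.
Qed.

Lemma feasible_dominated S T :
  {in S, forall l, l.1 < l.2} -> {in S, forall l, dominated T l} ->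
  feasible S -> feasible T.
Proof.
move=> S_lt S_dom feasS X X0 XT.
wlog out0 : X X0 XT / ~~ in_cut X 0.
  move=> gen; case: (boolP (in_cut X 0)) => [in0 | ]; last exact: gen.
  rewrite -crossingC; apply: gen; last exact: in_cutC0.
  - by rewrite -setCT (inj_eq (@setC_inj _)).
  - by rewrite -setC0 (inj_eq (@setC_inj _)).
have := feasS X X0 XT; rewrite !crossing_cat.
have ge2 := cycle_cut_ge2 out0 X0.
case: (ltnP (crossing X (cycle_edges n)) 3) => [lt3 cross_S | ge3 _]; last first.
  exact: leq_trans ge3 (leq_addr _ _).
have /hasP[l lS cross_l] : has (crosses X) S by rewrite -crossing_gt0; lia.
have := dominated_crosses out0 lt3 (S_lt l lS) cross_l (S_dom l lS).
rewrite -crossing_gt0; lia.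
Qed.

Lemma dominating_subseq H S : {in S, forall l, dominated H l} ->
  exists T, [/\ {subset T <= H}, size T <= 2 * size S & {in S, forall l, dominated T l}].
Proof.
elim: S => [|l S IHS] domS; first by exists [::].
have [|T [TH sizeT domT]] := IHS; first by move=> x xS; apply: domS; rewrite inE xS orbT.
have /andP[/hasP[b bH rbl] /hasP[b' b'H lb'l]] := domS l (mem_head _ _).
exists [:: b, b' & T]; split => /=.
- by move=> x; rewrite !inE => /orP[/eqP-> | /orP[/eqP-> | /TH]].
- by rewrite mulnS !addSn ltnS ltnS.
move=> x; rewrite inE => /orP[/eqP-> | xS].
  by apply/andP; split; apply/hasP; [exists b | exists b']; rewrite ?inE ?eqxx ?orbT.
by apply: dominated_sub (domT x xS) => y yT; rewrite !inE yT !orbT.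
Qed.

End Domination.

Fixpoint argmax (T : Type) (le : rel T) (s : seq T) : option T :=
  if s is x :: s' then
    Some (if argmax le s' is Some y then (if le x y then y else x) else x)
  else None.

Lemma argmax_mem (T : eqType) (le : rel T) s y : argmax le s = Some y -> y \in s.
Proof.
elim: s y => [//|x s IHs] y /=.
case E: (argmax le s) => [z|] [<-]; last exact: mem_head.
by case: ifP; rewrite inE ?eqxx ?(IHs z E) ?orbT.
Qed.

Lemma argmax_max (T : eqType) (le : rel T) s x : total le -> transitive le ->
  x \in s -> exists2 y, argmax le s = Some y & le x y.
Proof.
move=> le_total le_trans; elim: s => [//|z s IHs].
have le_refl a : le a a by have := le_total a a; rewrite orbb.
rewrite inE => /orP[/eqP-> | xs] /=.
  case: (argmax le s) => [y|]; last by exists z.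
  by case: ifP => le_zy; [exists y | exists z].
have [y -> le_xy] := IHs xs; case: ifPn => le_zy; [by exists y|exists z => //].
by have := le_total z y; rewrite (negbTE le_zy) /= => /(le_trans _ _ _ le_xy).
Qed.

Section Streaming.
Variable n : nat.
Implicit Types (l : link n) (L M : seq (link n)).

Definition farthest_right M (u : 'I_n) : option (link n) :=
  argmax (fun a b : link n => a.2 <= b.2) [seq b <- M | b.1 == u].

Definition farthest_left M (w : 'I_n) : option (link n) :=
  argmax (fun a b : link n => b.1 <= a.1) [seq b <- M | b.2 == w].

Definition extreme_links M : seq (link n) :=
  pmap (farthest_right M) (enum 'I_n) ++ pmap (farthest_left M) (enum 'I_n).

Lemma size_extreme_links M : size (extreme_links M) <= 2 * n.
Proof.
rewrite size_cat !size_pmap mul2n -addnn.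
by apply: leq_add; rewrite -[X in _ <= X](size_enum_ord n) count_size.
Qed.

Lemma extreme_links_sub M : {subset extreme_links M <= M}.
Proof.
move=> b; rewrite mem_cat !mem_pmap => /orP[] /mapP[u _ /esym/argmax_mem];
  by rewrite mem_filter => /andP[].
Qed.

Lemma extreme_links_dominated M : {in M, forall l, dominated (extreme_links M) l}.
Proof.
move=> l lM; apply/andP; split; apply/hasP.
- have l_in : l \in [seq b <- M | b.1 == l.1] by rewrite mem_filter eqxx.
  have [b Eb le_l2] := argmax_max (le := fun a b : link n => a.2 <= b.2)
    (fun a b => leq_total a.2 b.2) (fun b a c => @leq_trans b.2 a.2 c.2) l_in.
  exists b.
    by rewrite mem_cat !mem_pmap; apply/orP; left; apply/mapP; exists l.1; rewrite ?mem_enum.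
  by move/argmax_mem: Eb; rewrite mem_filter /extends_right le_l2 andbT => /andP[].
- have l_in : l \in [seq b <- M | b.2 == l.2] by rewrite mem_filter eqxx.
  have [b Eb le_b1] := argmax_max (le := fun a b : link n => b.1 <= a.1)
    (fun a b => leq_total b.1 a.1) (fun b a c le_ba le_cb => leq_trans le_cb le_ba)
    l_in.
  exists b.
    by rewrite mem_cat !mem_pmap; apply/orP; right; apply/mapP; exists l.2; rewrite ?mem_enum.
  by move/argmax_mem: Eb; rewrite mem_filter /extends_left le_b1 andbT => /andP[].
Qed.

Definition stream_step M l : seq (link n) := extreme_links (l :: M).

Definition stream_state L : seq (link n) := foldl stream_step [::] L.

Lemma stream_state_inv L :
  {subset stream_state L <= L} /\ {in L, forall l, dominated (stream_state L) l}.
Proof.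
elim/last_ind: L => [//|L e [sub dom]].
rewrite /stream_state foldl_rcons -/(stream_state L).
have sub_e : {subset e :: stream_state L <= rcons L e}.
  by move=> x; rewrite mem_rcons !inE => /orP[-> // | /sub ->]; rewrite orbT.
split; first by move=> x /extreme_links_sub /sub_e.
move=> l; rewrite mem_rcons inE => /orP[/eqP-> | lL].
  exact: extreme_links_dominated (mem_head _ _).
apply: dominated_trans (@extreme_links_dominated (e :: stream_state L)) _.
by apply: dominated_sub (dom l lL) => x xs; rewrite inE xs orbT.
Qed.

End Streaming.

Section MinFeasibleSubset.
Variable n : nat.
Implicit Types (l : link n) (H L S T : seq (link n)).

Definition feasibleb S : bool := [forall X : {set 'I_n},
  (X != set0) ==> (X != setT) ==> (3 <= crossing X (cycle_edges n ++ S))].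

Lemma feasibleP S : reflect (feasible S) (feasibleb S).
Proof.
apply: (iffP forallP) => [feasS X X0 XT | feasS X]; first by have := feasS X; rewrite X0 XT.
by apply/implyP => X0; apply/implyP => XT; apply: feasS.
Qed.

Definition min_feasible_subset H : seq (link n) :=
  enum [arg min_(T < [set x in H] | (T \subset [set x in H]) && feasibleb (enum T)) #|T|].

Lemma min_feasible_subsetP H : feasible (enum [set x in H]) ->
  let S := min_feasible_subset H in
  [/\ uniq S, {subset S <= H}, feasible S &
      forall T : {set link n}, T \subset [set x in H] -> feasible (enum T) ->
        size S <= #|T|].
Proof.
move=> feasH; rewrite /min_feasible_subset.
case: arg_minnP => [|U /andP[UH /feasibleP feasU] minU].
  by rewrite subxx; apply/feasibleP.
split=> [||//|T TH feasT]; first exact: enum_uniq.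
  by move=> x; rewrite mem_enum => /(subsetP UH); rewrite inE.
by rewrite -cardE minU // TH; apply/feasibleP.
Qed.

Lemma min_feasible_subset_approx H L :
  {in L, forall l, l.1 < l.2} -> {in L, forall l, dominated H l} -> feasible L ->
  let S := min_feasible_subset H in
  [/\ uniq S, {subset S <= H}, feasible S &
      forall S', {subset S' <= L} -> feasible S' -> size S <= 2 * size S'].
Proof.
move=> L_lt L_dom feasL.
have dominated_enum T l : dominated T l -> dominated (enum [set x in T]) l.
  by apply: dominated_sub => x xT; rewrite mem_enum inE.
have feasH : feasible (enum [set x in H]).
  by apply: feasible_dominated L_lt _ feasL => l /L_dom /dominated_enum.
have [uniqS subS feasS minS] := min_feasible_subsetP feasH.
split=> // S' S'L feasS'.
have [T [TH sizeT domT]] := @dominating_subseq _ H S' (fun l lS' => L_dom l (S'L l lS')).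
apply: leq_trans (minS [set x in T] _ _) _.
- by apply/subsetP => x; rewrite !inE => /TH.
- apply: feasible_dominated (fun l lS' => L_lt l (S'L l lS')) _ feasS'.
  by move=> l /domT /dominated_enum.
- by rewrite cardsE; apply: leq_trans (card_size T) sizeT.
Qed.

End MinFeasibleSubset.

Theorem mainTheorem2 :
  exists (A : forall n : nat, stream_alg n) (c : nat),
    (* total memory O(n) edges *)
    (forall n : nat, 3 <= n ->
       size (sa_init (A n)) <= c * n /\
       (forall (s : seq (link n)) (e : link n), size (sa_step (A n) s e) <= c * n)) /\
    (* 2-approximation on every feasible instance, for every stream order *)
    (forall (n : nat) (L : seq (link n)), 3 <= n -> valid_links L -> feasible L ->
       let S := run (A n) L in
       [/\ uniq S, {subset S <= L}, feasible S &
           forall S' : seq (link n), uniq S' -> {subset S' <= L} -> feasible S' ->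
             size S <= 2 * size S']).
Proof.
exists (fun n => StreamAlg [::] (@stream_step n) (@min_feasible_subset n)), 2; split.
  by move=> n _; split=> // s e; apply: size_extreme_links.
move=> n L _ /andP[_ /allP L_lt] feasL.
have [state_sub state_dom] := stream_state_inv L.
have [uniqS subS feasS minS] := min_feasible_subset_approx L_lt state_dom feasL.
split=> // [x /subS /state_sub // | S' _]; exact: minS.
Qed.
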